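(* Let $\Psi$ be a root system in a real inner product space, with base $\{\gamma_1,\dots,\gamma_m\}$ and positive roots $\Psi^+$, and let $\mathfrak{s}^+=\{H\in\operatorname{span}\Psi:(H,\gamma_i)>0\text{ for all } i\}$. Let $\Psi_1=\operatorname{span}_{\mathbb{Z}}\{\gamma_2,\dots,\gamma_m\}\cap\Psi$ with positive roots $\Psi_1^+=\Psi_1\cap\Psi^+$, and let $R_1=\{H\in\mathfrak{s}^+:\|H\|\ge1,\ (\gamma_1,H)\ge(\gamma_j,H)\text{ for all } j\}$. Then there exists $C>0$ such that for all $\alpha\in\Psi^+\setminus\Psi_1^+$ and all $H\in R_1$, $$(H,\alpha)\ge C\|H\|.$$
   Context: In the paper $\Psi$ arises as a simple subroot system of an irreducible root system $\Phi$ with base $\Delta$, i.e. $\Psi=\operatorname{span}_{\mathbb{Z}}\{\gamma_1,\dots,\gamma_m\}\cap\Phi$ for some subset $\{\gamma_1,\dots,\gamma_m\}\subseteq\Delta$. *)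

From HB Require Import structures.
From mathcomp Require Import all_boot all_order all_algebra.
From mathcomp Require Import reals.
Set Implicit Arguments. Unset Strict Implicit. Unset Printing Implicit Defensive.
Import Order.TTheory GRing.Theory Num.Theory.
Local Open Scope ring_scope.

(* The real inner product space is modelled as R^n = 'rV[R]_n with the
   standard inner product. *)
Definition dot (R : realType) (n : nat) (u v : 'rV[R]_n) : R := (u *m v^T) 0 0.
Definition vnorm (R : realType) (n : nat) (u : 'rV[R]_n) : R := Num.sqrt (dot u u).

(* A (finite, crystallographic, not necessarily reduced) root system,
   given as a finite list of vectors. *)
Definition is_root_system (R : realType) (n : nat) (Psi : seq 'rV[R]_n) : Prop :=
  [/\ 0 \notin Psi,
      (forall a b, a \in Psi -> b \in Psi ->
         b - ((2 * dot b a) / dot a a) *: a \in Psi) &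
      (forall a b, a \in Psi -> b \in Psi ->
         (2 * dot b a) / dot a a \in Num.int)].

Definition zcomb (R : realType) (n m : nat) (gamma : 'I_m -> 'rV[R]_n)
  (k : 'I_m -> int) : 'rV[R]_n := \sum_(i < m) (k i)%:~R *: gamma i.

Definition is_base (R : realType) (n m : nat) (Psi : seq 'rV[R]_n)
  (gamma : 'I_m -> 'rV[R]_n) : Prop :=
  [/\ (forall i, gamma i \in Psi),
      (forall c : 'I_m -> R, \sum_(i < m) c i *: gamma i = 0 -> forall i, c i = 0) &
      (forall a, a \in Psi -> exists k : 'I_m -> int,
          a = zcomb gamma k /\ ((forall i, 0 <= k i) \/ (forall i, k i <= 0)))].

Definition pos_root (R : realType) (n m : nat) (Psi : seq 'rV[R]_n)
  (gamma : 'I_m -> 'rV[R]_n) (a : 'rV[R]_n) : Prop :=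
  a \in Psi /\ exists k : 'I_m -> int, a = zcomb gamma k /\ forall i, 0 <= k i.

(* Psi_1 = span_Z {gamma_2, ..., gamma_m} ∩ Psi   (gamma_1 = gamma ord0) *)
Definition in_Psi1 (R : realType) (n m : nat) (Psi : seq 'rV[R]_n)
  (gamma : 'I_m.+1 -> 'rV[R]_n) (a : 'rV[R]_n) : Prop :=
  a \in Psi /\ exists k : 'I_m.+1 -> int, a = zcomb gamma k /\ k ord0 = 0.

Definition in_span (R : realType) (n : nat) (Psi : seq 'rV[R]_n) (H : 'rV[R]_n) : Prop :=
  exists c : 'I_(size Psi) -> R, H = \sum_(i < size Psi) c i *: Psi`_i.

Definition in_splus (R : realType) (n m : nat) (Psi : seq 'rV[R]_n)
  (gamma : 'I_m -> 'rV[R]_n) (H : 'rV[R]_n) : Prop :=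
  in_span Psi H /\ forall i, 0 < dot H (gamma i).

Definition in_R1 (R : realType) (n m : nat) (Psi : seq 'rV[R]_n)
  (gamma : 'I_m.+1 -> 'rV[R]_n) (H : 'rV[R]_n) : Prop :=
  [/\ in_splus Psi gamma H, 1 <= vnorm H &
      forall j, dot (gamma j) H <= dot (gamma ord0) H].

From HB Require Import structures.
From mathcomp Require Import all_boot all_order all_algebra.
From mathcomp Require Import reals.
From mathcomp Require Import ring lra.
Import Order.TTheory GRing.Theory Num.Theory.
Local Open Scope ring_scope.
Set Implicit Arguments. Unset Strict Implicit.

(* For a positive root [alpha] outside [Psi_1] the [gamma_1]-coefficient is a
   positive integer and all others are nonnegative, so on the closed chamber
   [(H, alpha) >= (H, gamma_1)], which on [R_1] is the largest pairing
   [(H, gamma_i)].  Conversely the coordinates of [H] in the linearly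
   independent base are the pairings [(H, gamma_i)] multiplied by the inverse
   Gram matrix, so [||H||] is at most a constant depending only on the base
   times [max_i |(H, gamma_i)| = (H, gamma_1)]. *)

Section Dot.
Variables (R : realType) (n : nat).
Implicit Types u v : 'rV[R]_n.

Lemma dotE u v : dot u v = \sum_j u 0 j * v 0 j.
Proof. by rewrite /dot !mxE; apply: eq_bigr => j _; rewrite mxE. Qed.

Lemma dotC u v : dot u v = dot v u.
Proof. by rewrite !dotE; apply: eq_bigr => j _; exact: mulrC. Qed.

Lemma dot_sumr k u (a : 'I_k -> R) (w : 'I_k -> 'rV[R]_n) :
  dot u (\sum_i a i *: w i) = \sum_i a i * dot u (w i).
Proof.
rewrite dotE; under eq_bigr do rewrite summxE big_distrr.
rewrite exchange_big; apply: eq_bigr => i _; rewrite dotE big_distrr.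
by apply: eq_bigr => j _; rewrite !mxE; exact: mulrCA.
Qed.

Lemma dot_self_eq0 v : dot v v = 0 -> v = 0.
Proof.
rewrite dotE => /psumr_eq0P v0; apply/rowP => j; rewrite mxE.
have /eqP := v0 (fun i _ => sqr_ge0 (v 0 i)) j isT.
by rewrite mulf_eq0 orbb => /eqP.
Qed.

Lemma dot_mulmx_tr (m : nat) u (A : 'M[R]_(m, n)) i :
  (u *m A^T) 0 i = dot u (row i A).
Proof. by rewrite dotE mxE; apply: eq_bigr => j _; rewrite !mxE. Qed.

End Dot.

Section CoordinatesInBase.
Variables (R : realType) (n k : nat) (gamma : 'I_k -> 'rV[R]_n).
Hypothesis gamma_free :
  forall c : 'I_k -> R, \sum_i c i *: gamma i = 0 -> forall i, c i = 0.

Let B : 'M[R]_(k, n) := \matrix_i gamma i.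

Lemma mulmx_base (c : 'rV[R]_k) : c *m B = \sum_i c 0 i *: gamma i.
Proof. by rewrite mulmx_sum_row; apply: eq_bigr => i _; rewrite rowK. Qed.

Lemma gram_unitmx : B *m B^T \in unitmx.
Proof.
rewrite -row_free_unit; apply: inj_row_free => v vG0.
have /dot_self_eq0 : dot (v *m B) (v *m B) = 0.
  by rewrite /dot trmx_mul mulmxA -(mulmxA v) vG0 mul0mx mxE.
rewrite mulmx_base => /gamma_free v0; apply/rowP => i; rewrite mxE; exact: v0.
Qed.

Lemma coef_bounded_by_pairings :
  exists2 M : R, 0 <= M & forall (c : 'I_k -> R) (d : R),
    (forall i, `|dot (\sum_j c j *: gamma j) (gamma i)| <= d) ->
    forall i, `|c i| <= d * M.
Proof.
pose Gi := invmx (B *m B^T).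
exists (\sum_j \sum_a `|Gi j a|) => [|c d le_d i].
  by do 2!apply: sumr_ge0 => ? _.
pose cv : 'rV[R]_k := \row_j c j.
have cvE : cv = (cv *m B *m B^T) *m Gi by rewrite -(mulmxA cv) mulmxK ?gram_unitmx.
have -> : c i = cv 0 i by rewrite mxE.
rewrite cvE mxE mulr_sumr; apply: le_trans (ler_norm_sum _ _ _) _.
apply: ler_sum => j _; rewrite normrM.
have d0 : 0 <= d := le_trans (normr_ge0 _) (le_d j).
apply: ler_pM => //.
  rewrite dot_mulmx_tr rowK mulmx_base.
  by under eq_bigr do rewrite mxE.
by rewrite (bigD1 i) //= lerDl; apply: sumr_ge0.
Qed.

Lemma vnorm_bounded_by_pairings :
  exists2 K : R, 0 < K & forall (c : 'I_k -> R) (d : R), 0 <= d ->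
    (forall i, `|dot (\sum_j c j *: gamma j) (gamma i)| <= d) ->
    vnorm (\sum_j c j *: gamma j) <= K * d.
Proof.
have [M M0 le_cM] := coef_bounded_by_pairings.
pose K := k%:R * M + 1.
have K0 : 0 < K by rewrite ltr_wpDl ?mulr_ge0.
exists (Num.sqrt K); first by rewrite sqrtr_gt0.
move=> c d d0 le_d; set H := \sum_j c j *: gamma j.
have HH : dot H H <= K * d ^+ 2.
  rewrite {2}/H dot_sumr; apply: (@le_trans _ _ (\sum_(i < k) d * M * d)).
    apply: ler_sum => i _; apply: le_trans (ler_norm _) _.
    by rewrite normrM ler_pM ?le_cM ?le_d.
  rewrite sumr_const card_ord -mulr_natl /K.
  have : 0 <= d ^+ 2 by exact: sqr_ge0.
  have -> : k%:R * (d * M * d) = k%:R * M * d ^+ 2 by ring.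
  rewrite mulrDl mul1r; lra.
rewrite /vnorm; apply: le_trans (ler_wsqrtr HH) _.
by rewrite sqrtrM ?(ltW K0) // sqrtr_sqr ger0_norm.
Qed.

End CoordinatesInBase.

Lemma span_in_span_base (R : realType) n k (Psi : seq 'rV[R]_n)
    (gamma : 'I_k -> 'rV[R]_n) H :
  (forall a, a \in Psi -> exists c : 'I_k -> R, a = \sum_i c i *: gamma i) ->
  in_span Psi H -> exists c : 'I_k -> R, H = \sum_i c i *: gamma i.
Proof.
move=> Psi_gamma [c ->].
apply: (big_ind (fun v => exists c : 'I_k -> R, v = \sum_i c i *: gamma i)).
- by exists (fun _ => 0); rewrite big1 // => i _; exact: scale0r.
- move=> x y [c1 ->] [c2 ->]; exists (fun i => c1 i + c2 i).
  by rewrite -big_split; apply: eq_bigr => i _; rewrite scalerDl.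
- move=> i _; have [c' ->] := Psi_gamma Psi`_i (mem_nth 0 (ltn_ord i)).
  exists (fun j => c i * c' j); rewrite scaler_sumr.
  by apply: eq_bigr => j _; exact: scalerA.
Qed.

Lemma dot_zcomb_ge (R : realType) n k (gamma : 'I_k -> 'rV[R]_n)
    (kk : 'I_k -> int) (H : 'rV[R]_n) (i0 : 'I_k) :
  (forall i, 0 <= kk i) -> 1 <= kk i0 -> (forall i, 0 <= dot H (gamma i)) ->
  dot H (gamma i0) <= dot H (zcomb gamma kk).
Proof.
move=> kk_ge0 kk_i0 H_ge0; rewrite /zcomb dot_sumr (bigD1 i0) //=.
apply: ler_wpDr; first by apply: sumr_ge0 => i _; rewrite mulr_ge0 ?ler0z.
by rewrite ler_peMl ?ler1z.
Qed.

Theorem lemma2 (R : realType) (n m : nat) (Psi : seq 'rV[R]_n)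
  (gamma : 'I_m.+1 -> 'rV[R]_n) :
  is_root_system Psi -> is_base Psi gamma ->
  exists C : R, 0 < C /\
    forall alpha : 'rV[R]_n,
      pos_root Psi gamma alpha -> ~ in_Psi1 Psi gamma alpha ->
      forall H : 'rV[R]_n, in_R1 Psi gamma H ->
        C * vnorm H <= dot H alpha.
Proof.
move=> _ [_ gamma_free Psi_zcomb].
have [K K0 normH_le] := vnorm_bounded_by_pairings gamma_free.
exists K^-1; split=> [|alpha [alpha_Psi [kk [alpha_kk kk_ge0]]] notPsi1 H [[H_span H_pos] _ H_max]].
  by rewrite invr_gt0.
have kk0 : 1 <= kk ord0.
  rewrite -gtz0_ge1 lt0r (kk_ge0 ord0) andbT; apply/eqP => kk00.
  by apply: notPsi1; split=> //; exists kk.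
have Psi_gamma a : a \in Psi -> exists c : 'I_m.+1 -> R, a = \sum_i c i *: gamma i.
  by case/Psi_zcomb => kk' [-> _]; exists (fun i => (kk' i)%:~R).
have [c Hc] := span_in_span_base Psi_gamma H_span.
have le_normH : vnorm H <= K * dot H (gamma ord0).
  rewrite {1}Hc; apply: normH_le => [|i]; first exact/ltW/H_pos.
  by rewrite -Hc gtr0_norm ?H_pos // !(dotC H) H_max.
rewrite ler_pdivrMl // (le_trans le_normH) // ler_wpM2l ?(ltW K0) //.
by rewrite alpha_kk; apply: dot_zcomb_ge => // i; exact: ltW.
Qed.
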